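(* Let $i\geq1$ and let $\tau$ be an SSRCT of shape $\alpha$ such that the partition $\widetilde\alpha$ has an addable node in column $i+1$. Then $\phi_{i+1}(\tau)$ has shape $\mathfrak{d}_i(\alpha)$.
   Context: Compositions (positive parts) are drawn as reverse composition diagrams: row $r$ from the top has $\alpha_r$ left-justified boxes; $\widetilde\alpha$ is the partition obtained by sorting the parts of $\alpha$ decreasingly; an addable node of a partition is a position whose addition gives a partition. An SSRCT of shape $\alpha$ is a filling by positive integers with rows weakly decreasing left to right, first column strictly increasing top to bottom, and: for rows $r<s$ and column $c$ with $(s,c+1)\in\alpha$, if $(r,c)\in\alpha$ and $\tau(r,c)\geq\tau(s,c+1)$ then $(r,c+1)\in\alpha$ and $\tau(r,c+1)>\tau(s,c+1)$. $\mathfrak{d}_i(\alpha)$ is obtained by subtracting $1$ from the rightmost part of $\alpha$ equal to $i$ and omitting a resulting $0$. $\phi_{i+1}$: set $\tau(r,c)=0$ outside $\alpha$; let $r_1$ be the largest index with $\alpha_{r_1}=i$, and for $j\geq2$ let $r_j$ be the largest $r<r_{j-1}$ with $\tau(r,i)>\tau(r_{j-1},i)\geq\tau(r,i+1)$, ending at $r_k$. $\phi_{i+1}(\tau)$ is obtained by placing, for $j=k,\ldots,2$, the original entry $\tau(r_{j-1},i)$ into box $(r_j,i)$ and deleting box $(r_1,i)$ (deleting the row if it becomes empty). *)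

From mathcomp Require Import all_boot.
Set Implicit Arguments. Unset Strict Implicit. Unset Printing Implicit Defensive.

(* Compositions are [seq nat] with positive parts; tableaux are [seq (seq nat)],
   row r (1-based, from the top) being [nth [::] t r.-1], its boxes read left to
   right.  Rows and columns are indexed from 1 as in the paper. *)

Definition is_composition (alpha : seq nat) : bool := all (fun a => 0 < a) alpha.

Definition inbox (alpha : seq nat) (r c : nat) : bool :=
  [&& 1 <= r, r <= size alpha, 1 <= c & c <= nth 0 alpha r.-1].

(* tau(r,c), with the convention tau(r,c) = 0 outside the diagram *)
Definition entry (t : seq (seq nat)) (r c : nat) : nat :=
  if (r == 0) || (c == 0) then 0 else nth 0 (nth [::] t r.-1) c.-1.

Definition SSRCT (t : seq (seq nat)) (alpha : seq nat) : Prop :=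
  is_composition alpha /\ [/\ shape t = alpha,
      (forall r c, inbox alpha r c -> 0 < entry t r c),
      (forall r c, 1 <= c -> inbox alpha r c.+1 -> entry t r c.+1 <= entry t r c),
      (forall r, 1 <= r -> r < size alpha -> entry t r 1 < entry t r.+1 1) &
      (forall r s c, 1 <= r -> r < s -> 1 <= c ->
         inbox alpha s c.+1 -> inbox alpha r c ->
         entry t s c.+1 <= entry t r c ->
         (inbox alpha r c.+1 /\ entry t s c.+1 < entry t r c.+1))].

Definition sort_partition (alpha : seq nat) : seq nat := sort geq alpha.

(* (k, c) is an addable node of the partition lam (k, c >= 1; parts beyond the
   length are 0): adding it yields a partition *)
Definition addable (lam : seq nat) (k c : nat) : bool :=
  [&& 1 <= k, 1 <= c, nth 0 lam k.-1 == c.-1 & ((k == 1) || (c <= nth 0 lam k.-2))].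

Definition has_addable_in_column (lam : seq nat) (c : nat) : Prop :=
  exists k, addable lam k c.

(* d_i(alpha): subtract 1 from the rightmost part equal to i, omitting a 0 *)
Fixpoint dfrak (i : nat) (s : seq nat) : seq nat :=
  match s with
  | [::] => [::]
  | a :: s' =>
      if i \in s' then a :: dfrak i s'
      else if a == i then (if a.-1 == 0 then s' else a.-1 :: s')
      else a :: s'
  end.

(* largest (1-based) index r with s_r = i, or 0 if there is none *)
Fixpoint lastpos (i : nat) (s : seq nat) : nat :=
  match s with
  | [::] => 0
  | a :: s' => let p := lastpos i s' in
               if p != 0 then p.+1 else if a == i then 1 else 0
  end.

Fixpoint search (t : seq (seq nat)) (i r0 n : nat) : option nat :=
  match n with
  | 0 => None
  | n'.+1 => if (entry t r0 i < entry t n'.+1 i) && (entry t n'.+1 i.+1 <= entry t r0 i)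
             then Some n'.+1 else search t i r0 n'
  end.

Definition next_row (t : seq (seq nat)) (i r : nat) : option nat := search t i r r.-1.

(* r_2, r_3, ..., r_k starting from r = r_1 (strictly decreasing, so fuel r suffices) *)
Fixpoint chain (t : seq (seq nat)) (i r fuel : nat) : seq nat :=
  match fuel with
  | 0 => [::]
  | f.+1 => match next_row t i r with
            | Some r' => r' :: chain t i r' f
            | None => [::]
            end
  end.

Definition set_entry (t : seq (seq nat)) (r c v : nat) : seq (seq nat) :=
  set_nth [::] t r.-1 (set_nth 0 (nth [::] t r.-1) c.-1 v).

Definition delete_box (t : seq (seq nat)) (r c : nat) : seq (seq nat) :=
  let row := nth [::] t r.-1 in
  let row' := take c.-1 row ++ drop c row in
  if row' == [::] then take r.-1 t ++ drop r t else set_nth [::] t r.-1 row'.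

Definition phi (m : nat) (t : seq (seq nat)) : seq (seq nat) :=
  let i := m.-1 in
  let r1 := lastpos i (shape t) in
  let rs := r1 :: chain t i r1 r1 in
  (* for each consecutive pair (r_{j-1}, r_j): put original tau(r_{j-1},i) in (r_j,i) *)
  let t' := foldr (fun p acc => set_entry acc p.2 i (entry t p.1 i)) t
                  (zip rs (behead rs)) in
  delete_box t' r1 i.

From mathcomp Require Import all_boot.

(* Every box that phi_{i+1} overwrites, (r_j, i) for j >= 2, holds an entry
   exceeding tau(r_{j-1}, i) >= 0, so it lies in the diagram: the sliding
   changes entries but not the shape.  The shape therefore changes only
   through the deletion of box (r_1, i), the last box of the lowest row of
   length i; such a row exists because an addable node of the sorted
   partition in column i+1 sits next to a part equal to i. *)

Lemma addable_mem {lam : seq nat} {k c} : 0 < c -> addable lam k c.+1 -> c \in lam.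
Proof.
move=> c_gt0 /and4P [_ _ /eqP /= lam_k _].
have k_lt : k.-1 < size lam.
  by rewrite ltnNge; apply: contraTN c_gt0 => /(nth_default 0); rewrite lam_k => ->.
by rewrite -lam_k mem_nth.
Qed.

Lemma entry_gt0_inbox t r c : 0 < entry t r c -> inbox (shape t) r c.
Proof.
rewrite /entry /inbox size_map nth_shape.
case: r => [|r]; case: c => [|c] //= pos_rc.
have c_lt : c < size (nth [::] t r).
  by rewrite ltnNge; apply: contraTN pos_rc => /(nth_default 0) ->.
have r_lt : r < size t.
  by rewrite ltnNge; apply: contraTN c_lt => /(nth_default [::]) ->.
by rewrite r_lt c_lt.
Qed.

Lemma shape_set_entry t r c v :
  inbox (shape t) r c -> shape (set_entry t r c v) = shape t.
Proof.
case/and4P; rewrite size_map nth_shape /set_entry.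
case: r => // r _ /= r_le; case: c => // c _ /= c_le.
have row_size : size (set_nth 0 (nth [::] t r) c v) = size (nth [::] t r).
  by rewrite size_set_nth; apply/maxn_idPr.
elim: t r r_le row_size {c_le} => [|row t IH] [|r] //= r_le row_size.
- by rewrite row_size.
- by rewrite IH.
Qed.

Lemma shape_foldr_set_entry t c (f : nat * nat -> nat) (l : seq (nat * nat)) :
  all (fun r => inbox (shape t) r c) (unzip2 l) ->
  shape (foldr (fun p acc => set_entry acc p.2 c (f p)) t l) = shape t.
Proof.
elim: l => [|p l IH] //= /andP [inbox_p /IH sh_l].
by rewrite shape_set_entry // sh_l.
Qed.

Lemma search_lt {t i r0 n r} :
  search t i r0 n = Some r -> entry t r0 i < entry t r i.
Proof.
elim: n => //= n IH.
by case: ifP => [/andP [lt_n _] [<-] | _ /IH].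
Qed.

Lemma chain_inbox t i r0 f : all (fun r => inbox (shape t) r i) (chain t i r0 f).
Proof.
elim: f r0 => //= f IH r0.
rewrite /next_row; case found: search => [r|] //=.
by rewrite IH andbT entry_gt0_inbox // (leq_ltn_trans _ (search_lt found)).
Qed.

Lemma lastpos_eq0 i s : (lastpos i s == 0) = (i \notin s).
Proof.
elim: s => //= a s IH.
rewrite in_cons negb_or -IH (eq_sym i).
by case: (lastpos i s) => [|p] /=; [case: (a == i) | rewrite andbF].
Qed.

Lemma delete_box_cons row t r c :
  delete_box (row :: t) r.+2 c = row :: delete_box t r.+1 c.
Proof. by rewrite /delete_box /=; case: ifP. Qed.

Lemma shape_delete_box_lastpos i t : 0 < i -> i \in shape t ->
  shape (delete_box t (lastpos i (shape t)) i) = dfrak i (shape t).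
Proof.
move=> i_gt0; elim: t => [|row t IH] //=; rewrite in_cons.
case: (boolP (i \in shape t)) => [i_in _ | i_notin /predU1P [] // row_i].
  have := lastpos_eq0 i (shape t); rewrite i_in.
  case: (lastpos i (shape t)) IH => [|p] // IH _.
  by rewrite delete_box_cons /= IH.
have -> : lastpos i (shape t) = 0 by apply/eqP; rewrite lastpos_eq0.
rewrite -row_i /delete_box !eqxx /=.
have -> : drop i row = [::] by rewrite row_i drop_size.
rewrite cats0 -size_eq0 size_take -row_i ltn_predL i_gt0.
case: i i_gt0 row_i {IH i_notin} => [|[|i]] //= _ row_i; first by rewrite drop0.
by rewrite size_take -row_i ltnSn.
Qed.

Theorem lemma6p22 (i : nat) (alpha : seq nat) (tau : seq (seq nat)) :
  1 <= i ->
  SSRCT tau alpha ->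
  has_addable_in_column (sort_partition alpha) i.+1 ->
  shape (phi i.+1 tau) = dfrak i alpha.
Proof.
move=> i_gt0 [_ [<- _ _ _ _]] [k /(addable_mem i_gt0)].
rewrite mem_sort => i_in; rewrite /phi /=.
set t' := foldr _ _ _.
have sh_t' : shape t' = shape tau.
  by apply: shape_foldr_set_entry; rewrite unzip2_zip // chain_inbox.
by rewrite -sh_t' shape_delete_box_lastpos // sh_t'.
Qed.
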